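(* Let $\mathcal U\subseteq\mathbb R^m$ be nonempty with $\underline{\dim}_{\mathrm{MB}}(\mathcal U)<n$, where $n\le m$. Then $\ker(\mathbf A)\cap(\mathcal U\setminus\{\mathbf 0\})=\emptyset$ for $\lambda^{n\times m}$-almost all $\mathbf A\in\mathbb R^{n\times m}$.
   Context: For nonempty $\mathcal{U}\subseteq\mathbb{R}^m$ and $\rho>0$, $N_{\mathcal U}(\rho)$ denotes the smallest number of open Euclidean balls of radius $\rho$ covering $\mathcal U$ ($=\infty$ if no finite cover exists). The lower Minkowski dimension is $\underline{\dim}_{\mathrm B}(\mathcal U)=\liminf_{\rho\to0}\frac{\log N_{\mathcal U}(\rho)}{\log(1/\rho)}$. The lower modified Minkowski dimension is $\underline{\dim}_{\mathrm{MB}}(\mathcal U)=\inf\{\sup_{i\in\mathbb N}\underline{\dim}_{\mathrm B}(\mathcal U_i):\mathcal U\subseteq\bigcup_{i\in\mathbb N}\mathcal U_i\}$, the infimum taken over all countable covers of $\mathcal U$ by nonempty bounded sets $\mathcal U_i$. $\lambda^{n\times m}$ is Lebesgue measure on $\mathbb R^{n\times m}$. *)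

From Stdlib Require Import Reals.
Open Scope R_scope.

(** Points of R^m are represented as functions [nat -> R] that vanish at
    indices >= m; n x m matrices as [nat -> nat -> R], only entries
    (i,j) with i < n, j < m being relevant. *)
Definition vec := nat -> R.
Definition in_Rm (m : nat) (x : vec) : Prop := forall i, (m <= i)%nat -> x i = 0.

Fixpoint sumR (k : nat) (f : nat -> R) : R :=
  match k with O => 0 | S k' => sumR k' f + f k' end.
Fixpoint prodR (k : nat) (f : nat -> R) : R :=
  match k with O => 1 | S k' => prodR k' f * f k' end.

Definition norm (m : nat) (x : vec) : R := sqrt (sumR m (fun i => x i * x i)).
Definition dist (m : nat) (x y : vec) : R := norm m (fun i => x i - y i).

Definition covered_by_balls (m : nat) (U : vec -> Prop) (rho : R) (k : nat) : Prop :=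
  exists c : nat -> vec,
    (forall i, in_Rm m (c i)) /\
    forall x, U x -> exists i, (i < k)%nat /\ dist m x (c i) < rho.

(** [lower_box_dim_le m U s] :  lower Minkowski dimension of U is <= s, i.e.
    liminf_{rho -> 0} log N_U(rho) / log(1/rho) <= s, unfolded:
    for all eps, delta > 0 there is rho in (0,delta) with
    log N_U(rho)/log(1/rho) < s + eps  (where N_U(rho) = min k with a cover
    by k balls; N_U(rho) = infinity makes the quotient +infinity). *)
Definition lower_box_dim_le (m : nat) (U : vec -> Prop) (s : R) : Prop :=
  forall eps delta, 0 < eps -> 0 < delta ->
    exists rho, 0 < rho < delta /\
      exists k, covered_by_balls m U rho k /\
        (forall k', covered_by_balls m U rho k' -> (k <= k')%nat) /\
        ln (INR k) / ln (1 / rho) < s + eps.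

Definition bounded_set (m : nat) (V : vec -> Prop) : Prop :=
  exists B, forall x, V x -> norm m x <= B.

(** [lower_MB_dim_lt m U t] : the lower modified Minkowski dimension of U is < t,
    i.e. inf over countable covers (U_i) of U by nonempty bounded subsets of R^m
    of sup_i lower_box_dim(U_i) is < t; equivalently there is such a cover and
    some s < t bounding all lower_box_dim(U_i). *)
Definition lower_MB_dim_lt (m : nat) (U : vec -> Prop) (t : R) : Prop :=
  exists (Ui : nat -> vec -> Prop) (s : R),
    s < t /\
    (forall i x, Ui i x -> in_Rm m x) /\
    (forall i, exists x, Ui i x) /\
    (forall i, bounded_set m (Ui i)) /\
    (forall x, U x -> exists i, Ui i x) /\
    (forall i, lower_box_dim_le m (Ui i) s).

Definition mat := nat -> nat -> R.
Definition box_vol (n m : nat) (a b : mat) : R :=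
  prodR n (fun i => prodR m (fun j => b i j - a i j)).
Definition in_box (n m : nat) (a b : mat) (A : mat) : Prop :=
  forall i j, (i < n)%nat -> (j < m)%nat -> a i j <= A i j <= b i j.
Definition lebesgue_null (n m : nat) (S : mat -> Prop) : Prop :=
  forall eps, 0 < eps ->
    exists a b : nat -> mat,
      (forall k i j, (i < n)%nat -> (j < m)%nat -> a k i j <= b k i j) /\
      (forall N, sumR N (fun k => box_vol n m (a k) (b k)) <= eps) /\
      (forall A, S A -> exists k, in_box n m (a k) (b k) A).

Definition ae_mat (n m : nat) (P : mat -> Prop) : Prop :=
  lebesgue_null n m (fun A => ~ P A).

Definition in_kernel (n m : nat) (A : mat) (x : vec) : Prop :=
  forall i, (i < n)%nat -> sumR m (fun j => A i j * x j) = 0.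

(* Write U as a countable union of bounded sets U_i of lower box dimension s < n.
   It suffices that, for each i, each column j and each r, the matrices with
   entries bounded by r annihilating some x in U_i with |x_j| >= 1/(r+1) are null.
   Cover U_i by k balls of a radius rho with k rho^n arbitrarily small (possible
   since s < n).  A matrix annihilating x annihilates the centre c of a ball
   containing x up to O(rho); once the entries off column j are fixed up to a
   grid of mesh rho, each row equation confines A_ij to an interval of length
   O(rho), so each centre costs boxes of total volume O(rho^n). *)

From Stdlib Require Import Reals Lra Lia List ZArith Classical ClassicalEpsilon.
Import ListNotations.
Open Scope R_scope.

Lemma sumR_ext k f g :
  (forall i, (i < k)%nat -> f i = g i) -> sumR k f = sumR k g.
Proof.
  revert f g; induction k as [|k IH]; intros f g H; simpl; auto.
  rewrite (IH f g) by (intros; apply H; lia). rewrite H by lia; auto.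
Qed.

Lemma sumR_le k f g :
  (forall i, (i < k)%nat -> f i <= g i) -> sumR k f <= sumR k g.
Proof.
  revert f g; induction k as [|k IH]; intros f g H; simpl; [lra|].
  pose proof (IH f g ltac:(intros; apply H; lia)); pose proof (H k ltac:(lia)); lra.
Qed.

Lemma sumR_plus k f g : sumR k (fun i => f i + g i) = sumR k f + sumR k g.
Proof. induction k as [|k IH]; simpl; [lra|]. rewrite IH; lra. Qed.

Lemma sumR_minus k f g : sumR k (fun i => f i - g i) = sumR k f - sumR k g.
Proof. induction k as [|k IH]; simpl; [lra|]. rewrite IH; lra. Qed.

Lemma sumR_const k c : sumR k (fun _ => c) = INR k * c.
Proof. induction k as [|k IH]; simpl sumR; [simpl; lra|]. rewrite IH, S_INR; lra. Qed.

Lemma sumR_abs k f : Rabs (sumR k f) <= sumR k (fun i => Rabs (f i)).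
Proof.
  induction k as [|k IH]; simpl; [rewrite Rabs_R0; lra|].
  eapply Rle_trans; [apply Rabs_triang|]; lra.
Qed.

Lemma sumR_nonneg k f : (forall i, (i < k)%nat -> 0 <= f i) -> 0 <= sumR k f.
Proof.
  intros H. replace 0 with (sumR k (fun _ => 0)) by (rewrite sumR_const; lra).
  apply sumR_le; auto.
Qed.

Lemma sumR_shift k f : sumR (S k) f = f O + sumR k (fun i => f (S i)).
Proof. induction k as [|k IH]; simpl in *; [lra|]. rewrite IH; simpl; lra. Qed.

Lemma sumR_single k l0 v : (l0 < k)%nat ->
  sumR k (fun l => if Nat.eqb l l0 then v else 0) = v.
Proof.
  induction k as [|k IH]; intros H; [lia|]; simpl.
  destruct (Nat.eqb_spec k l0) as [->|Hne].
  - rewrite (sumR_ext l0 _ (fun _ => 0)), sumR_const; [lra|].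
    intros i Hi; destruct (Nat.eqb_spec i l0); [lia|auto].
  - rewrite IH by lia; lra.
Qed.

Lemma term_le_sumR k f l :
  (forall i, (i < k)%nat -> 0 <= f i) -> (l < k)%nat -> f l <= sumR k f.
Proof.
  revert l; induction k as [|k IH]; intros l H Hl; [lia|]; simpl.
  pose proof (H k ltac:(lia)).
  destruct (Nat.eq_dec l k) as [->|Hne].
  - pose proof (sumR_nonneg k f ltac:(intros; apply H; lia)); lra.
  - pose proof (IH l ltac:(intros; apply H; lia) ltac:(lia)); lra.
Qed.

Lemma prodR_ext k f g :
  (forall i, (i < k)%nat -> f i = g i) -> prodR k f = prodR k g.
Proof.
  revert f g; induction k as [|k IH]; intros f g H; simpl; auto.
  rewrite (IH f g) by (intros; apply H; lia). rewrite H by lia; auto.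
Qed.

Lemma prodR_nonneg k f : (forall i, (i < k)%nat -> 0 <= f i) -> 0 <= prodR k f.
Proof.
  induction k as [|k IH]; intros H; simpl; [lra|].
  apply Rmult_le_pos; [apply IH; intros|]; apply H; lia.
Qed.

Lemma prodR_const k c : prodR k (fun _ => c) = c ^ k.
Proof. induction k as [|k IH]; simpl; auto. rewrite IH; ring. Qed.

Lemma prodR_all_but_one k j h w f : (j < k)%nat ->
  (forall l, (l < k)%nat -> l <> j -> f l = h) -> f j = w ->
  prodR k f = h ^ (k - 1) * w.
Proof.
  revert f; induction k as [|k IH]; intros f Hj Hf Hw; [lia|]; simpl prodR.
  destruct (Nat.eq_dec j k) as [->|Hne].
  - rewrite (prodR_ext k f (fun _ => h)) by (intros; apply Hf; lia).
    rewrite prodR_const, Hw.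
    replace (S k - 1)%nat with k by lia; ring.
  - rewrite (IH f), (Hf k); auto; try lia.
    + replace (S k - 1)%nat with (S (k - 1)) by lia; simpl; ring.
Qed.

Lemma coord_le_norm m x l : (l < m)%nat -> Rabs (x l) <= norm m x.
Proof.
  intros Hl. unfold norm. rewrite <- sqrt_Rsqr_abs. apply sqrt_le_1_alt.
  apply (term_le_sumR m (fun i => x i * x i)); auto.
  intros; apply Rle_0_sqr.
Qed.

Lemma Rabs_le_inv x e : Rabs x <= e -> -e <= x <= e.
Proof. unfold Rabs; destruct (Rcase_abs x); lra. Qed.

Definition box : Type := (mat * mat)%type.
Definition vol n m (b : box) : R := box_vol n m (fst b) (snd b).
Definition box_ok n m (b : box) : Prop :=
  forall i j, (i < n)%nat -> (j < m)%nat -> fst b i j <= snd b i j.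
Fixpoint listvol n m (L : list box) : R :=
  match L with [] => 0 | b :: L' => vol n m b + listvol n m L' end.

Definition jordan_null n m (S : mat -> Prop) : Prop :=
  forall eps, 0 < eps -> exists L,
    (forall b, In b L -> box_ok n m b) /\ listvol n m L <= eps /\
    forall A, S A -> exists b, In b L /\ in_box n m (fst b) (snd b) A.

Lemma vol_nonneg n m b : box_ok n m b -> 0 <= vol n m b.
Proof.
  intros H. apply prodR_nonneg; intros i Hi; apply prodR_nonneg; intros l Hl.
  pose proof (H i l Hi Hl); lra.
Qed.

Lemma listvol_nonneg n m L : (forall b, In b L -> box_ok n m b) -> 0 <= listvol n m L.
Proof.
  induction L as [|b L IH]; intros H; simpl; [lra|].
  pose proof (vol_nonneg n m b (H b (or_introl eq_refl))).
  pose proof (IH (fun b' Hb' => H b' (or_intror Hb'))); lra.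
Qed.

Lemma listvol_app n m L1 L2 : listvol n m (L1 ++ L2) = listvol n m L1 + listvol n m L2.
Proof. induction L1 as [|b L1 IH]; simpl; [lra|]. rewrite IH; lra. Qed.

Lemma listvol_const n m L v :
  (forall b, In b L -> vol n m b = v) -> listvol n m L = INR (length L) * v.
Proof.
  induction L as [|b L IH]; intros H; simpl listvol; simpl length; [simpl; lra|].
  rewrite S_INR, H, IH by auto with datatypes; lra.
Qed.

Lemma listvol_flat_map_le {T : Type} n m (F : T -> list box) (l : list T) B :
  (forall t, listvol n m (F t) <= B) -> listvol n m (flat_map F l) <= INR (length l) * B.
Proof.
  intros H. induction l as [|t l IH]; simpl flat_map; simpl length; [simpl; lra|].
  rewrite listvol_app, S_INR. pose proof (H t); lra.
Qed.

Lemma jordan_null_mono n m (S T : mat -> Prop) :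
  (forall A, S A -> T A) -> jordan_null n m T -> jordan_null n m S.
Proof.
  intros HST HT eps Heps. destruct (HT eps Heps) as [L [HL1 [HL2 HL3]]].
  exists L; auto.
Qed.

Lemma jordan_null_union n m S T :
  jordan_null n m S -> jordan_null n m T -> jordan_null n m (fun A => S A \/ T A).
Proof.
  intros HS HT eps Heps.
  destruct (HS (eps / 2) ltac:(lra)) as [L1 [Hok1 [Hvol1 Hcov1]]].
  destruct (HT (eps / 2) ltac:(lra)) as [L2 [Hok2 [Hvol2 Hcov2]]].
  exists (L1 ++ L2); split; [|split].
  - intros b Hb; apply in_app_or in Hb as [Hb|Hb]; auto.
  - rewrite listvol_app; lra.
  - intros A [HA|HA]; [destruct (Hcov1 A HA) as [b [Hb HAb]]|destruct (Hcov2 A HA) as [b [Hb HAb]]];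
      exists b; split; auto; apply in_or_app; auto.
Qed.

Lemma jordan_null_finite_union n m (S : nat -> mat -> Prop) N :
  (forall k, (k < N)%nat -> jordan_null n m (S k)) ->
  jordan_null n m (fun A => exists k, (k < N)%nat /\ S k A).
Proof.
  induction N as [|N IH]; intros H.
  - intros eps Heps. exists []; simpl; split; [tauto|split; [lra|]].
    intros A [k [Hk _]]; lia.
  - apply (jordan_null_mono n m _ (fun A => (exists k, (k < N)%nat /\ S k A) \/ S N A)).
    + intros A [k [Hk HA]]. destruct (Nat.eq_dec k N) as [->|Hne]; auto.
      left; exists k; split; auto; lia.
    + apply jordan_null_union; auto.
Qed.

Lemma lebesgue_null_mono n m (S T : mat -> Prop) :
  (forall A, S A -> T A) -> lebesgue_null n m T -> lebesgue_null n m S.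
Proof.
  intros HST HT eps Heps. destruct (HT eps Heps) as [a [b Hab]].
  exists a, b; firstorder.
Qed.

Section BoxSequence.

Variables (n m : nat) (F : nat -> list box) (d : box).
Hypothesis F_nonnil : forall k, F k <> [].

Definition boxes_upto M : list box := concat (map F (seq 0 M)).

Lemma boxes_upto_S M : boxes_upto (S M) = boxes_upto M ++ F M.
Proof. unfold boxes_upto. rewrite seq_S, map_app, concat_app; simpl. now rewrite app_nil_r. Qed.

Lemma boxes_upto_length M : (M <= length (boxes_upto M))%nat.
Proof.
  induction M as [|M IH]; [simpl; lia|]. rewrite boxes_upto_S, length_app.
  destruct (F M) eqn:E; [contradiction (F_nonnil M)|simpl; lia].
Qed.

Lemma boxes_upto_nth N M1 M2 : (M1 <= M2)%nat -> (N < length (boxes_upto M1))%nat ->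
  nth N (boxes_upto M1) d = nth N (boxes_upto M2) d.
Proof.
  intros HM HN. replace M2 with (M1 + (M2 - M1))%nat by lia.
  unfold boxes_upto. rewrite seq_app, map_app, concat_app, app_nth1; auto.
Qed.

Definition box_seq N : box := nth N (boxes_upto (S N)) d.

Lemma box_seq_nth N M : (N < M)%nat -> box_seq N = nth N (boxes_upto M) d.
Proof. intros H. apply boxes_upto_nth; [lia|pose proof (boxes_upto_length (S N)); lia]. Qed.

Lemma box_seq_complete k b : In b (F k) -> exists N, box_seq N = b.
Proof.
  intros Hb. assert (Hb' : In b (boxes_upto (S k))) by (rewrite boxes_upto_S; auto with datatypes).
  destruct (In_nth _ _ d Hb') as [N [HN <-]]. exists N.
  rewrite (box_seq_nth N (S N + S k)) by lia. symmetry; apply (boxes_upto_nth N (S k)); auto; lia.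
Qed.

Lemma listvol_boxes_upto M : listvol n m (boxes_upto M) = sumR M (fun k => listvol n m (F k)).
Proof. induction M as [|M IH]; [reflexivity|]. rewrite boxes_upto_S, listvol_app, IH; reflexivity. Qed.

Hypothesis vol_d : vol n m d = 0.
Hypothesis F_ok : forall k b, In b (F k) -> box_ok n m b.

Lemma sumR_vol_nth_le L M : (forall b, In b L -> box_ok n m b) ->
  sumR M (fun N => vol n m (nth N L d)) <= listvol n m L.
Proof.
  revert M; induction L as [|b L IH]; intros M HL.
  - rewrite (sumR_ext M _ (fun _ => 0)), sumR_const; [simpl; lra|].
    intros [|i] _; auto.
  - destruct M as [|M]; [apply listvol_nonneg; auto|].
    rewrite sumR_shift; simpl. pose proof (IH M ltac:(auto with datatypes)); lra.
Qed.

Lemma in_boxes_upto b M : In b (boxes_upto M) -> exists k, In b (F k).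
Proof.
  unfold boxes_upto. intros Hb. apply in_concat in Hb as [L [HL Hb]].
  apply in_map_iff in HL as [k [<- _]]. eauto.
Qed.

Lemma box_seq_ok N : box_ok n m d -> box_ok n m (box_seq N).
Proof.
  intros Hd. unfold box_seq.
  destruct (Nat.lt_ge_cases N (length (boxes_upto (S N)))) as [HN|HN].
  - apply (nth_In _ d), in_boxes_upto in HN as [k Hk]. eauto.
  - rewrite nth_overflow by auto; auto.
Qed.

Lemma sumR_vol_box_seq_le M :
  sumR M (fun N => vol n m (box_seq N)) <= sumR M (fun k => listvol n m (F k)).
Proof.
  rewrite <- (listvol_boxes_upto M), (sumR_ext M _ (fun N => vol n m (nth N (boxes_upto M) d))).
  - apply sumR_vol_nth_le. intros b Hb. apply in_boxes_upto in Hb as [k Hk]. eauto.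
  - intros N HN. now rewrite (box_seq_nth N M HN).
Qed.

End BoxSequence.

Definition zero_box : box := (fun _ _ => 0, fun _ _ => 0).

Lemma vol_zero_box n m : (1 <= n)%nat -> (1 <= m)%nat -> vol n m zero_box = 0.
Proof.
  intros Hn Hm. destruct n as [|n]; [lia|]; destruct m as [|m]; [lia|].
  unfold vol, box_vol; simpl; ring.
Qed.

Lemma sumR_geometric eps M : sumR M (fun k => eps / 2 ^ S k) = eps - eps / 2 ^ M.
Proof.
  induction M as [|M IH]; [simpl; field|].
  change (sumR (S M) (fun k => eps / 2 ^ S k)) with (sumR M (fun k => eps / 2 ^ S k) + eps / 2 ^ S M).
  rewrite IH; simpl; field. apply pow_nonzero; lra.
Qed.

Lemma lebesgue_null_countable_union n m (Z : nat -> mat -> Prop) :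
  (1 <= n)%nat -> (1 <= m)%nat -> (forall k, jordan_null n m (Z k)) ->
  lebesgue_null n m (fun A => exists k, Z k A).
Proof.
  intros Hn Hm HZ eps Heps.
  assert (Hpos : forall k, 0 < eps / 2 ^ S k) by (intros; apply Rdiv_lt_0_compat; [lra|apply pow_lt; lra]).
  destruct (choice (fun k L => (forall b, In b L -> box_ok n m b) /\ listvol n m L <= eps / 2 ^ S k /\
      forall A, Z k A -> exists b, In b L /\ in_box n m (fst b) (snd b) A) (fun k => HZ k _ (Hpos k)))
    as [L HL].
  set (F := fun k => zero_box :: L k).
  assert (Hnonnil : forall k, F k <> []) by discriminate.
  assert (Hzero : vol n m zero_box = 0) by (apply vol_zero_box; auto).
  assert (Hok : forall k b, In b (F k) -> box_ok n m b).
  { intros k b [<-|Hb]; [intros i j _ _; simpl; lra|apply (HL k); auto]. }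
  exists (fun N => fst (box_seq F zero_box N)), (fun N => snd (box_seq F zero_box N)).
  split; [|split].
  - intros N. apply (box_seq_ok n m F zero_box Hok N). intros i j _ _; simpl; lra.
  - intros M. eapply Rle_trans; [apply (sumR_vol_box_seq_le n m F zero_box Hnonnil Hzero Hok M)|].
    assert (0 < eps / 2 ^ M) by (apply Rdiv_lt_0_compat; [lra|apply pow_lt; lra]).
    enough (sumR M (fun k => listvol n m (F k)) <= sumR M (fun k => eps / 2 ^ S k))
      by (rewrite sumR_geometric in *; lra).
    apply sumR_le. intros k _. unfold F; simpl listvol. rewrite Hzero. pose proof (HL k); lra.
  - intros A [k HA]. destruct (proj2 (proj2 (HL k)) A HA) as [b [Hb HAb]].
    destruct (box_seq_complete F zero_box Hnonnil k b (or_intror Hb)) as [N HN].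
    exists N; rewrite HN; auto.
Qed.

Lemma floor_exists t : 0 <= t -> exists g : nat, INR g <= t < INR g + 1.
Proof.
  intros Ht. destruct (archimed t) as [H1 H2].
  assert (Hz : (0 < up t)%Z) by (apply lt_IZR; lra).
  exists (Z.to_nat (up t - 1)). rewrite INR_IZR_INZ, Z2Nat.id by lia.
  rewrite minus_IZR; simpl; lra.
Qed.

Lemma grid_cells Rb h : 0 < h -> 0 <= Rb -> exists G : nat, INR G * h <= 2 * Rb + h /\
  forall a, -Rb <= a <= Rb ->
    exists g, (g < G)%nat /\ -Rb + INR g * h <= a <= -Rb + INR g * h + h.
Proof.
  intros Hh HRb.
  assert (Hscale : forall x, x / h * h = x) by (intros; field; lra).
  assert (Hfloor : forall x, 0 <= x -> exists g : nat, INR g * h <= x < INR g * h + h).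
  { intros x Hx. destruct (floor_exists (x / h)) as [g [Hg1 Hg2]].
    { apply Rmult_le_pos; [lra|left; apply Rinv_0_lt_compat; lra]. }
    exists g. apply (Rmult_le_compat_r h) in Hg1; apply (Rmult_lt_compat_r h) in Hg2; try lra.
    rewrite Hscale in Hg1, Hg2; lra. }
  destruct (Hfloor (2 * Rb) ltac:(lra)) as [g0 Hg0].
  exists (S g0). split; [rewrite S_INR; lra|].
  intros a Ha. destruct (Hfloor (a + Rb) ltac:(lra)) as [g Hg].
  exists g; split; [|lra].
  apply INR_lt. rewrite S_INR. apply (Rmult_lt_reg_r h); lra.
Qed.

Definition upd_grid (t : nat -> nat -> nat) i l g : nat -> nat -> nat :=
  fun i' l' => if andb (Nat.eqb i' i) (Nat.eqb l' l) then g else t i' l'.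

Fixpoint grids (G : nat) (es : list (nat * nat)) : list (nat -> nat -> nat) :=
  match es with
  | [] => [fun _ _ => O]
  | (i, l) :: es' => flat_map (fun g => map (fun t => upd_grid t i l g) (grids G es')) (seq 0 G)
  end.

Lemma length_grids G es : length (grids G es) = (G ^ length es)%nat.
Proof.
  induction es as [|[i l] es IH]; [reflexivity|]. simpl grids.
  rewrite (flat_map_constant_length (c := length (grids G es))) by (intros; apply length_map).
  rewrite length_seq, IH; reflexivity.
Qed.

Lemma grids_complete G es f : (forall i l, In (i, l) es -> (f i l < G)%nat) ->
  exists t, In t (grids G es) /\ forall i l, In (i, l) es -> t i l = f i l.
Proof.
  induction es as [|[i l] es IH]; intros Hf.
  - exists (fun _ _ => O); split; [left; auto|intros ? ? []].
  - destruct IH as [t [Ht Htf]]; [intros; apply Hf; auto with datatypes|].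
    exists (upd_grid t i l (f i l)); split.
    + simpl grids. apply in_flat_map. exists (f i l); split.
      * apply in_seq. pose proof (Hf i l (or_introl eq_refl)); lia.
      * apply in_map_iff; exists t; auto.
    + intros i' l' Hin. unfold upd_grid.
      destruct (Nat.eqb_spec i' i) as [->|Hi]; destruct (Nat.eqb_spec l' l) as [->|Hl]; simpl; auto;
        (destruct Hin as [E|Hin]; [inversion E; congruence|auto]).
Qed.

Definition off_column (n m j : nat) : list (nat * nat) :=
  list_prod (seq 0 n) (seq 0 j ++ seq (S j) (m - S j)).

Lemma in_off_column n m j i l : (j < m)%nat ->
  In (i, l) (off_column n m j) <-> (i < n)%nat /\ (l < m)%nat /\ l <> j.
Proof.
  intros Hj. unfold off_column. rewrite in_prod_iff, in_app_iff, !in_seq. split; intros; lia.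
Qed.

Lemma length_off_column n m j : (j < m)%nat -> length (off_column n m j) = (n * (m - 1))%nat.
Proof.
  intros Hj. unfold off_column. rewrite length_prod, length_app, !length_seq. f_equal; lia.
Qed.

(* Boxes covering {A : |A_il| <= Rb, |(A c)_i| <= E0}: the entries off column [j]
   range over a grid of mesh [h], and then the equation for row [i] pins
   [A_ij] to an interval of half-width (E0 + m h K) / |c_j|. *)
Section Slab.

Variables (n m j : nat) (c : vec) (Rb h K E0 : R).
Hypotheses (Hj : (j < m)%nat) (Hcj : c j <> 0) (Hh : 0 < h) (HE0 : 0 <= E0)
  (HK : forall l, (l < m)%nat -> Rabs (c l) <= K).

Definition grid_corner (t : nat -> nat -> nat) i l : R := -Rb + INR (t i l) * h.

Definition off_column_sum t i : R :=
  sumR m (fun l => if Nat.eqb l j then 0 else grid_corner t i l * c l).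

Definition slab_halfwidth : R := (E0 + INR m * h * K) / Rabs (c j).

Definition slab_box t : box :=
  (fun i l => if Nat.eqb l j then - off_column_sum t i / c j - slab_halfwidth else grid_corner t i l,
   fun i l => if Nat.eqb l j then - off_column_sum t i / c j + slab_halfwidth else grid_corner t i l + h).

Lemma K_nonneg : 0 <= K.
Proof. pose proof (HK j Hj); pose proof (Rabs_pos (c j)); lra. Qed.

Lemma slab_error_nonneg : 0 <= E0 + INR m * h * K.
Proof.
  pose proof (Rmult_le_pos _ _ (Rmult_le_pos _ _ (pos_INR m) (Rlt_le _ _ Hh)) K_nonneg); lra.
Qed.

Lemma slab_halfwidth_nonneg : 0 <= slab_halfwidth.
Proof.
  pose proof slab_error_nonneg. pose proof (Rabs_pos_lt _ Hcj).
  apply Rmult_le_pos; [lra|left; apply Rinv_0_lt_compat; lra].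
Qed.

Lemma slab_box_ok t : box_ok n m (slab_box t).
Proof.
  pose proof slab_halfwidth_nonneg. intros i l _ _; simpl.
  destruct (Nat.eqb l j); lra.
Qed.

Lemma vol_slab_box t : vol n m (slab_box t) = (h ^ (m - 1) * (2 * slab_halfwidth)) ^ n.
Proof.
  unfold vol, box_vol. rewrite <- prodR_const. apply prodR_ext; intros i _.
  apply (prodR_all_but_one m j); auto; simpl.
  - intros l _ Hl. destruct (Nat.eqb_spec l j); [contradiction|ring].
  - rewrite Nat.eqb_refl; ring.
Qed.

Lemma row_off_column_identity t (A : mat) i :
  A i j * c j + off_column_sum t i =
  sumR m (fun l => A i l * c l) -
  sumR m (fun l => if Nat.eqb l j then 0 else (A i l - grid_corner t i l) * c l).
Proof.
  rewrite <- sumR_minus, <- (sumR_single m j (A i j * c j)) by auto.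
  unfold off_column_sum. rewrite <- sumR_plus. apply sumR_ext; intros l _.
  destruct (Nat.eqb_spec l j) as [->|]; ring.
Qed.

Lemma slab_box_covers t (A : mat) :
  (forall i l, (i < n)%nat -> (l < m)%nat -> l <> j ->
     grid_corner t i l <= A i l <= grid_corner t i l + h) ->
  (forall i, (i < n)%nat -> Rabs (sumR m (fun l => A i l * c l)) <= E0) ->
  in_box n m (fst (slab_box t)) (snd (slab_box t)) A.
Proof.
  intros Hgrid Hrow i l Hi Hl; simpl.
  destruct (Nat.eqb_spec l j) as [->|Hlj]; [|pose proof (Hgrid i l Hi Hl Hlj); lra].
  assert (Hdev : Rabs (sumR m (fun l => if Nat.eqb l j then 0 else (A i l - grid_corner t i l) * c l))
                 <= INR m * h * K).
  { rewrite Rmult_assoc, <- sumR_const. eapply Rle_trans; [apply sumR_abs|].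
    apply sumR_le; intros l Hl'. destruct (Nat.eqb_spec l j).
    - rewrite Rabs_R0. pose proof K_nonneg. apply Rmult_le_pos; lra.
    - rewrite Rabs_mult. apply Rmult_le_compat; try apply Rabs_pos; auto.
      pose proof (Hgrid i l Hi Hl' n0). apply Rabs_le; lra. }
  assert (Hcentre : Rabs (A i j * c j + off_column_sum t i) <= E0 + INR m * h * K).
  { rewrite row_off_column_identity. eapply Rle_trans; [apply Rabs_triang|].
    rewrite Rabs_Ropp. pose proof (Hrow i Hi); lra. }
  assert (Habs : Rabs (A i j - - off_column_sum t i / c j) <= slab_halfwidth).
  { replace (A i j - - off_column_sum t i / c j) with ((A i j * c j + off_column_sum t i) / c j)
      by (field; auto).
    unfold slab_halfwidth, Rdiv. rewrite Rabs_mult, Rabs_inv.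
    apply Rmult_le_compat_r; auto. left; apply Rinv_0_lt_compat, Rabs_pos_lt; auto. }
  apply Rabs_le_inv in Habs; lra.
Qed.

End Slab.

Lemma slab_jordan_cover n m j (c : vec) Rb h K dl E0 :
  (j < m)%nat -> 0 < h -> 0 <= Rb -> 0 < dl -> dl <= Rabs (c j) -> 0 <= E0 ->
  (forall l, (l < m)%nat -> Rabs (c l) <= K) ->
  exists L, (forall b, In b L -> box_ok n m b) /\
    listvol n m L <= (2 * Rb + h) ^ (n * (m - 1)) * (2 * (E0 + INR m * h * K) / dl) ^ n /\
    forall A, (forall i l, (i < n)%nat -> (l < m)%nat -> Rabs (A i l) <= Rb) ->
      (forall i, (i < n)%nat -> Rabs (sumR m (fun l => A i l * c l)) <= E0) ->
      exists b, In b L /\ in_box n m (fst b) (snd b) A.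
Proof.
  intros Hj Hh HRb Hdl Hdlc HE0 HK.
  assert (Hcj : c j <> 0) by (intros E; rewrite E, Rabs_R0 in Hdlc; lra).
  destruct (grid_cells Rb h Hh HRb) as [G [HG Hcell]].
  exists (map (slab_box m j c Rb h K E0) (grids G (off_column n m j))).
  split; [|split].
  - intros b Hb. apply in_map_iff in Hb as [t [<- _]]. apply slab_box_ok; auto.
  - rewrite (listvol_const n m _ ((h ^ (m - 1) * (2 * slab_halfwidth m j c h K E0)) ^ n)).
    2:{ intros b Hb. apply in_map_iff in Hb as [t [<- _]]. apply vol_slab_box; auto. }
    rewrite length_map, length_grids, length_off_column, pow_INR by auto.
    rewrite Rpow_mult_distr, <- pow_mult, <- Rmult_assoc.
    replace ((m - 1) * n)%nat with (n * (m - 1))%nat by lia.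
    rewrite <- Rpow_mult_distr.
    pose proof (slab_halfwidth_nonneg m j c h K E0 Hj Hcj Hh HE0 HK) as Hw.
    pose proof (pos_INR G).
    apply Rmult_le_compat; try (apply pow_le; nra); apply pow_incr; [nra|].
    split; [lra|]. unfold slab_halfwidth, Rdiv.
    rewrite <- Rmult_assoc. apply Rmult_le_compat_l.
    + pose proof (slab_error_nonneg m j c h K E0 Hj Hh HE0 HK); lra.
    + apply Rinv_le_contravar; auto.
  - intros A HA Hrow.
    destruct (choice (fun (p : nat * nat) g => (fst p < n)%nat -> (snd p < m)%nat ->
        (g < G)%nat /\ -Rb + INR g * h <= A (fst p) (snd p) <= -Rb + INR g * h + h)) as [f Hf].
    { intros [i l]. destruct (classic ((i < n)%nat /\ (l < m)%nat)) as [[Hi Hl]|Hout].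
      - destruct (Hcell (A i l)) as [g Hg]; [apply Rabs_le_inv, HA; auto|].
        exists g; auto.
      - exists O; simpl; tauto. }
    destruct (grids_complete G (off_column n m j) (fun i l => f (i, l))) as [t [Ht Htf]].
    { intros i l Hil. apply in_off_column in Hil as [Hi [Hl _]]; auto. apply (Hf (i, l)); auto. }
    exists (slab_box m j c Rb h K E0 t); split; [apply in_map; auto|].
    apply slab_box_covers; auto.
    intros i l Hi Hl Hlj. unfold grid_corner.
    rewrite Htf by (apply in_off_column; auto). apply (Hf (i, l)); auto.
Qed.

Lemma lower_box_dim_small_cover m V s (d : nat) Cc eps delta :
  lower_box_dim_le m V s -> s < INR d -> 0 < Cc -> 0 < eps -> 0 < delta ->
  exists rho k, 0 < rho < delta /\ covered_by_balls m V rho k /\ INR k * (Cc * rho ^ d) < eps.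
Proof.
  intros Hdim Hsd HCc Heps Hdelta.
  set (e := (INR d - s) / 2). assert (He : 0 < e) by (unfold e; lra).
  set (r0 := exp (ln (eps / Cc) / e)).
  destruct (Hdim e (Rmin delta (Rmin 1 r0)) He) as [rho [[Hrho Hrho'] [k [Hcov [_ Hlog]]]]].
  { apply Rmin_glb_lt; [lra|apply Rmin_glb_lt; [lra|apply exp_pos]]. }
  pose proof (Rmin_l delta (Rmin 1 r0)); pose proof (Rmin_r delta (Rmin 1 r0)).
  pose proof (Rmin_l 1 r0); pose proof (Rmin_r 1 r0).
  exists rho, k; split; [lra|split; [auto|]].
  destruct k as [|k']; [simpl; lra|].
  assert (Hk : 0 < INR (S k')) by apply lt_0_INR, Nat.lt_0_succ.
  assert (Hln_rho : ln rho < 0) by (rewrite <- ln_1; apply ln_increasing; lra).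
  assert (Hln_inv : ln (1 / rho) = - ln rho) by (unfold Rdiv; rewrite Rmult_1_l, ln_Rinv; lra).
  assert (Hlnk : ln (INR (S k')) < (s + e) * - ln rho).
  { rewrite Hln_inv in Hlog. apply (Rmult_lt_compat_r (- ln rho)) in Hlog; [|lra].
    unfold Rdiv in Hlog. rewrite Rmult_assoc, Rinv_l, Rmult_1_r in Hlog by lra. exact Hlog. }
  assert (Hsmall : e * ln rho < ln (eps / Cc)).
  { assert (Hr : ln rho < ln r0) by (apply ln_increasing; lra).
    unfold r0 in Hr. rewrite ln_exp in Hr.
    apply (Rmult_lt_compat_l e) in Hr; auto.
    replace (e * (ln (eps / Cc) / e)) with (ln (eps / Cc)) in Hr by (field; lra). exact Hr. }
  assert (Hprod : ln (INR (S k') * rho ^ d) < ln (eps / Cc)).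
  { rewrite ln_mult, ln_pow by (auto; apply pow_lt; lra).
    replace (INR d) with (s + 2 * e) by (unfold e; lra). nra. }
  apply ln_lt_inv in Hprod;
    [|apply Rmult_lt_0_compat; [auto|apply pow_lt; lra]|apply Rdiv_lt_0_compat; auto].
  apply (Rmult_lt_compat_r Cc) in Hprod; auto.
  replace (eps / Cc * Cc) with eps in Hprod by (field; lra). lra.
Qed.

Definition kernel_piece n m (V : vec -> Prop) j r : mat -> Prop := fun A =>
  (forall i l, (i < n)%nat -> (l < m)%nat -> Rabs (A i l) <= INR r) /\
  exists x, V x /\ 1 / (INR r + 1) <= Rabs (x j) /\ in_kernel n m A x.

Lemma kernel_row_near n m (A : mat) (x c : vec) Rb rho i :
  in_kernel n m A x -> (i < n)%nat ->
  (forall l, (l < m)%nat -> Rabs (A i l) <= Rb) ->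
  (forall l, (l < m)%nat -> Rabs (x l - c l) < rho) ->
  Rabs (sumR m (fun l => A i l * c l)) <= INR m * Rb * rho.
Proof.
  intros Hker Hi HA Hxc.
  replace (sumR m (fun l => A i l * c l)) with (sumR m (fun l => A i l * c l - A i l * x l))
    by (rewrite sumR_minus, (Hker i Hi); ring).
  rewrite Rmult_assoc, <- sumR_const. eapply Rle_trans; [apply sumR_abs|].
  apply sumR_le; intros l Hl.
  rewrite <- Rmult_minus_distr_l, Rabs_mult, Rabs_minus_sym.
  apply Rmult_le_compat; try apply Rabs_pos; auto. left; auto.
Qed.

Lemma kernel_piece_centre n m (V : vec -> Prop) B j r (A : mat) (x c : vec) rho :
  (forall y, V y -> norm m y <= B) -> (j < m)%nat ->
  rho <= 1 / (INR r + 1) / 2 -> rho <= 1 ->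
  (forall i l, (i < n)%nat -> (l < m)%nat -> Rabs (A i l) <= INR r) ->
  V x -> 1 / (INR r + 1) <= Rabs (x j) -> in_kernel n m A x -> dist m x c < rho ->
  1 / (INR r + 1) / 2 <= Rabs (c j) /\
  (forall l, (l < m)%nat -> Rabs (c l) <= Rabs B + 1) /\
  (forall i, (i < n)%nat -> Rabs (sumR m (fun l => A i l * c l)) <= INR m * INR r * rho).
Proof.
  intros HB Hj Hrho1 Hrho2 HA Hx Hxj Hker Hdist.
  assert (Hclose : forall l, (l < m)%nat -> Rabs (x l - c l) < rho).
  { intros l Hl. eapply Rle_lt_trans; [apply (coord_le_norm m (fun i => x i - c i)); auto|]. exact Hdist. }
  split; [|split].
  - pose proof (Hclose j Hj) as Hj_close. pose proof (Rabs_triang (x j - c j) (c j)) as Htri.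
    replace (x j - c j + c j) with (x j) in Htri by ring. lra.
  - intros l Hl. pose proof (Hclose l Hl) as Hl_close. pose proof (coord_le_norm m x l Hl).
    pose proof (HB x Hx). pose proof (Rle_abs B).
    pose proof (Rabs_triang (c l - x l) (x l)) as Htri.
    replace (c l - x l + x l) with (c l) in Htri by ring.
    rewrite Rabs_minus_sym in Htri. lra.
  - intros i Hi. apply (kernel_row_near n m A x c); auto.
Qed.

Lemma kernel_piece_jordan_null n m (V : vec -> Prop) B s j r :
  (j < m)%nat -> (forall x, V x -> norm m x <= B) ->
  lower_box_dim_le m V s -> s < INR n ->
  jordan_null n m (kernel_piece n m V j r).
Proof.
  intros Hj HB Hdim Hs eps Heps.
  set (dl := 1 / (INR r + 1) / 2). set (Rb := INR r). set (K := Rabs B + 1).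
  set (N := (n * (m - 1))%nat).
  assert (Hr : 0 < INR r + 1) by (pose proof (pos_INR r); lra).
  assert (Hdl : 0 < dl) by (unfold dl; apply Rdiv_lt_0_compat; [apply Rdiv_lt_0_compat|]; lra).
  assert (HRb : 0 <= Rb) by apply pos_INR.
  assert (HK : 0 < K) by (pose proof (Rabs_pos B); unfold K; lra).
  assert (Hm : 0 < INR m) by (apply lt_0_INR; lia).
  set (Y := 2 * (INR m * (Rb + K)) / dl).
  assert (HY : 0 < Y) by (unfold Y; apply Rdiv_lt_0_compat; [apply Rmult_lt_0_compat; nra|auto]).
  set (Cc := (2 * Rb + 1) ^ N * Y ^ n).
  assert (HCc : 0 < Cc) by (apply Rmult_lt_0_compat; apply pow_lt; lra).
  destruct (lower_box_dim_small_cover m V s n Cc eps (Rmin dl 1) Hdim Hs HCc Heps)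
    as [rho [k [[Hrho Hrho'] [[cc [_ Hcov]] Hcount]]]]; [apply Rmin_glb_lt; lra|].
  pose proof (Rmin_l dl 1); pose proof (Rmin_r dl 1).
  set (good := fun t => dl <= Rabs (cc t j) /\ forall l, (l < m)%nat -> Rabs (cc t l) <= K).
  destruct (choice (fun t L => (forall b, In b L -> box_ok n m b) /\ listvol n m L <= Cc * rho ^ n /\
      (good t -> forall A, (forall i l, (i < n)%nat -> (l < m)%nat -> Rabs (A i l) <= Rb) ->
         (forall i, (i < n)%nat -> Rabs (sumR m (fun l => A i l * cc t l)) <= INR m * Rb * rho) ->
         exists b, In b L /\ in_box n m (fst b) (snd b) A))) as [F HF].
  { intros t. destruct (classic (good t)) as [Hgood|Hbad].
    - destruct Hgood as [Hcj Hcl].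
      destruct (slab_jordan_cover n m j (cc t) Rb rho K dl (INR m * Rb * rho) Hj Hrho HRb Hdl Hcj
        ltac:(apply Rmult_le_pos; [apply Rmult_le_pos|]; lra) Hcl) as [L [Hok [Hvol Hcovers]]].
      exists L; split; [auto|split; [|auto]].
      eapply Rle_trans; [exact Hvol|]. unfold Cc.
      replace (2 * (INR m * Rb * rho + INR m * rho * K) / dl) with (rho * Y) by (unfold Y; field; lra).
      rewrite Rpow_mult_distr, (Rmult_comm (rho ^ n)), <- Rmult_assoc.
      apply Rmult_le_compat_r; [apply pow_le; lra|].
      apply Rmult_le_compat_r; [apply pow_le; lra|].
      apply pow_incr; lra.
    - exists []; simpl; split; [tauto|split; [apply Rmult_le_pos; [lra|apply pow_le; lra]|tauto]]. }
  exists (flat_map F (seq 0 k)); split; [|split].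
  - intros b Hb. apply in_flat_map in Hb as [t [_ Hb]]. apply (HF t); auto.
  - eapply Rle_trans; [apply listvol_flat_map_le; intros t; apply (HF t)|].
    rewrite length_seq; lra.
  - intros A [HA [x [Hx [Hxj Hker]]]]. destruct (Hcov x Hx) as [t [Ht Hdist]].
    destruct (kernel_piece_centre n m V B j r A x (cc t) rho HB Hj ltac:(fold dl; lra) ltac:(lra)
      HA Hx Hxj Hker Hdist) as [Hcj [Hcl Hrow]].
    destruct (proj2 (proj2 (HF t)) (conj Hcj Hcl) A HA Hrow) as [b [Hb HAb]].
    exists b; split; auto. apply in_flat_map; exists t; split; auto. apply in_seq; lia.
Qed.

Lemma lower_box_dim_nonneg m V s : (exists x, V x) -> lower_box_dim_le m V s -> 0 <= s.
Proof.
  intros [x Hx] Hdim. destruct (Rlt_le_dec s 0) as [Hs|Hs]; auto; exfalso.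
  destruct (Hdim (- s / 2) 1 ltac:(lra) ltac:(lra)) as [rho [[Hrho Hrho'] [k [[cc [_ Hcov]] [_ Hlog]]]]].
  destruct (Hcov x Hx) as [t [Ht _]].
  assert (Hlnk : 0 <= ln (INR k)).
  { rewrite <- ln_1. destruct (Nat.eq_dec k 1) as [->|Hk]; [simpl; lra|].
    left; apply ln_increasing; [lra|apply lt_1_INR; lia]. }
  assert (Hlnr : 0 < ln (1 / rho)).
  { rewrite <- ln_1. apply ln_increasing; [lra|].
    unfold Rdiv; rewrite Rmult_1_l, <- Rinv_1. apply Rinv_lt_contravar; lra. }
  assert (0 <= ln (INR k) / ln (1 / rho)) by (apply Rmult_le_pos; [|left; apply Rinv_0_lt_compat]; lra).
  lra.
Qed.

Lemma nat_above a : exists r : nat, a <= INR r.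
Proof.
  destruct (Rle_dec 0 a) as [Ha|Ha].
  - destruct (floor_exists a Ha) as [g Hg]. exists (S g); rewrite S_INR; lra.
  - exists O; simpl; lra.
Qed.

Lemma matrix_entries_bounded n m (A : mat) :
  exists Rb, forall i l, (i < n)%nat -> (l < m)%nat -> Rabs (A i l) <= Rb.
Proof.
  exists (sumR n (fun i => sumR m (fun l => Rabs (A i l)))). intros i l Hi Hl.
  eapply Rle_trans; [|apply (term_le_sumR n (fun i => sumR m (fun l => Rabs (A i l))) i); auto].
  - apply (term_le_sumR m (fun l => Rabs (A i l))); auto. intros; apply Rabs_pos.
  - intros; apply sumR_nonneg; intros; apply Rabs_pos.
Qed.

Lemma kernel_piece_of_kernel_point n m (V : vec -> Prop) (A : mat) x j i :
  V x -> x j <> 0 -> in_kernel n m A x ->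
  exists r, (i < S r)%nat /\ kernel_piece n m V j r A.
Proof.
  intros Hx Hxj Hker.
  destruct (matrix_entries_bounded n m A) as [Rb HRb].
  destruct (nat_above Rb) as [r1 Hr1]. destruct (nat_above (1 / Rabs (x j))) as [r2 Hr2].
  assert (Hxj' : 0 < Rabs (x j)) by (apply Rabs_pos_lt; auto).
  assert (Hr : INR r1 <= INR (r1 + r2 + i) /\ INR r2 <= INR (r1 + r2 + i))
    by (rewrite !plus_INR; pose proof (pos_INR r1); pose proof (pos_INR r2); pose proof (pos_INR i); lra).
  exists (r1 + r2 + i)%nat; split; [lia|split].
  - intros i' l Hi Hl. pose proof (HRb i' l Hi Hl); lra.
  - exists x; split; [auto|split; auto].
    assert (Hinv : 0 < 1 / Rabs (x j)) by (apply Rdiv_lt_0_compat; lra).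
    replace (Rabs (x j)) with (1 / (1 / Rabs (x j))) by (field; lra).
    unfold Rdiv at 1 2; rewrite !Rmult_1_l. apply Rinv_le_contravar; lra.
Qed.

Theorem proposition1 (m n : nat) (U : vec -> Prop) :
  (forall x, U x -> in_Rm m x) ->
  (exists x, U x) ->
  (n <= m)%nat ->
  lower_MB_dim_lt m U (INR n) ->
  ae_mat n m (fun A =>
    ~ exists x, U x /\ (exists j, (j < m)%nat /\ x j <> 0) /\ in_kernel n m A x).
Proof.
  intros _ _ Hnm [Ui [s [Hs [_ [Hne [Hbdd [Hcov Hdim]]]]]]].
  destruct n as [|n].
  { pose proof (lower_box_dim_nonneg m (Ui O) s (Hne O) (Hdim O)). simpl in Hs; lra. }
  apply (lebesgue_null_mono _ _ _ (fun A => exists r, exists i, (i < S r)%nat /\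
           exists j, (j < m)%nat /\ kernel_piece (S n) m (Ui i) j r A)).
  - intros A HA. apply NNPP in HA as [x [Hx [[j [Hj Hxj]] Hker]]].
    destruct (Hcov x Hx) as [i Hi].
    destruct (kernel_piece_of_kernel_point (S n) m (Ui i) A x j i Hi Hxj Hker) as [r [Hir Hpiece]].
    exists r, i; split; [|exists j]; auto.
  - apply lebesgue_null_countable_union; [lia|lia|intros r].
    apply jordan_null_finite_union; intros i _.
    apply jordan_null_finite_union; intros j Hj.
    destruct (Hbdd i) as [B HB].
    apply (kernel_piece_jordan_null _ _ _ B s); auto.
Qed.
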